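(* Let $u\in R^{\times}$ and $a,b\in R$, and let $\mathcal{B}_{(u,a,b)}$ be the corresponding $H_N^q$-cleft extension of $R$. If $1-q\in R^{\times}$, then there exists $a'\in R$ such that $\mathcal{B}_{(u,a,b)}\cong\mathcal{B}_{(u,a',0)}$ as right $H_N^q$-comodule algebras.
   Context: $R$ is a commutative unital ring, $N\ge2$ an integer, and $q\in R$ a root of the $N$-th cyclotomic polynomial over $\mathbb{Z}$. $H_N^q$ is the Taft Hopf algebra over $R$: generated as an algebra by $g,x$ with $g^N=1$, $x^N=0$, $xg=qgx$, and $\Delta(g)=g\otimes g$, $\Delta(x)=1\otimes x+x\otimes g$, $\varepsilon(g)=1$, $\varepsilon(x)=0$, $S(g)=g^{-1}$, $S(x)=-q^{-1}g^{-1}x$. For $u\in R^{\times}$, $a,b\in R$, $\mathcal{B}_{(u,a,b)}$ is the $R$-algebra generated by $v_g,v_x$ subject to $v_g^N=u$, $v_x^N=a$, $v_xv_g=qv_gv_x+bv_g^2$; it is a free $R$-module with basis $\{v_g^mv_x^n:0\le m,n<N\}$ and a right $H_N^q$-comodule algebra via $v_g\mapsto v_g\otimes g$, $v_x\mapsto 1\otimes x+v_x\otimes g$, and it is an $H_N^q$-cleft extension of $R$ (coinvariants equal to $R$, with a convolution-invertible comodule map $H_N^q\to\mathcal{B}_{(u,a,b)}$, $g^mx^n\mapsto v_g^mv_x^n$). *)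

From HB Require Import structures.
From mathcomp Require Import all_boot all_order all_algebra all_field.
Set Implicit Arguments. Unset Strict Implicit. Unset Printing Implicit Defensive.
Import GRing.Theory.
Local Open Scope ring_scope.

Definition cyclotomic_root (R : comUnitRingType) (N : nat) (q : R) : Prop :=
  root (map_poly (fun z : int => z%:~R) ('Phi_N)) q.

Definition is_alg_hom (R : comUnitRingType) (A C : algType R) (f : A -> C) : Prop :=
  [/\ forall x y, f (x + y) = f x + f y,
      forall (r : R) x, f (r *: x) = r *: f x,
      forall x y, f (x * y) = f x * f y
    & f 1 = 1].

Definition B_rel (R : comUnitRingType) (N : nat) (q u a b : R) (C : algType R)
  (cg cx : C) : Prop :=
  [/\ cg ^+ N = u%:A, cx ^+ N = a%:A & cx * cg = q *: (cg * cx) + b *: cg ^+ 2].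

(* (A, vg, vx) is THE R-algebra generated by vg, vx subject to the relations
   of B_(u,a,b): universal property of the presentation. *)
Definition is_B (R : comUnitRingType) (N : nat) (q u a b : R) (A : algType R)
  (vg vx : A) : Prop :=
  B_rel N q u a b vg vx /\
  forall (C : algType R) (cg cx : C), B_rel N q u a b cg cx ->
    (exists h : A -> C, [/\ is_alg_hom h, h vg = cg & h vx = cx]) /\
    (forall h1 h2 : A -> C, is_alg_hom h1 -> is_alg_hom h2 ->
       h1 vg = h2 vg -> h1 vx = h2 vx -> forall y, h1 y = h2 y).

(* A ⊗_R H_N^q is identified with families 'I_N -> 'I_N -> A via the R-basis
   {g^i x^j : 0 <= i, j < N} of H_N^q:  s  <->  \sum_(i,j) s i j ⊗ g^i x^j. *)
Definition tens (R : comUnitRingType) (N : nat) (A : algType R) := 'I_N -> 'I_N -> A.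

(* product in A ⊗ H_N^q, using g^i x^j g^i' x^j' = q^(j i') g^(i+i' mod N) x^(j+j')
   and x^N = 0 *)
Definition tmul (R : comUnitRingType) (N : nat) (q : R) (A : algType R)
  (s t : tens N A) : tens N A :=
  fun k l => \sum_(i < N) \sum_(j < N) \sum_(i' < N) \sum_(j' < N)
    if (((i + i') %% N)%N == k :> nat) && ((j + j')%N == l :> nat)
    then (q ^+ (j * i')) *: (s i j * t i' j') else 0.

(* a ⊗ g^m x^n *)
Definition tbas (R : comUnitRingType) (N : nat) (A : algType R) (y : A) (m n : nat)
  : tens N A := fun i j => if (i == m :> nat) && (j == n :> nat) then y else 0.

Definition tadd (R : comUnitRingType) (N : nat) (A : algType R) (s t : tens N A)
  : tens N A := fun i j => s i j + t i j.

(* rho : A -> A ⊗ H_N^q is the (right H_N^q-comodule algebra) coaction of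
   B_(u,a,b): the R-algebra map with vg |-> vg ⊗ g, vx |-> 1 ⊗ x + vx ⊗ g. *)
Definition is_B_coaction (R : comUnitRingType) (N : nat) (q : R) (A : algType R)
  (vg vx : A) (rho : A -> tens N A) : Prop :=
  [/\ forall y z, rho (y + z) = tadd (rho y) (rho z),
      forall (r : R) y, rho (r *: y) = (fun i j => r *: rho y i j),
      forall y z, rho (y * z) = tmul q (rho y) (rho z)
    & rho 1 = tbas 1 0 0] /\
  rho vg = tbas vg 1 0 /\ rho vx = tadd (tbas 1 0 1) (tbas vx 1 0).

Definition comod_alg_iso (R : comUnitRingType) (N : nat) (A A' : algType R)
  (rho : A -> tens N A) (rho' : A' -> tens N A') (f : A -> A') : Prop :=
  [/\ is_alg_hom f, bijective f
    & forall y i j, rho' (f y) i j = f (rho y i j)].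

From HB Require Import structures.
From mathcomp Require Import all_boot all_order all_algebra all_field.
From mathcomp Require Import ring.
Import GRing.Theory.
Set Implicit Arguments. Unset Strict Implicit. Unset Printing Implicit Defensive.
Local Open Scope ring_scope.

(* Put d := b / (1 - q), so that b = d - q d, and a' := a - d^N u.  As q is a
   root of 'Phi_N, the Gaussian binomials [N choose k]_q vanish for 0 < k < N,
   so the q-binomial theorem gives (X + Y)^N = X^N + Y^N whenever Y X = q X Y.
   Hence (v_g, v_x - d v_g) satisfies the relations of B_(u,a',0) and
   (v_g', v_x' + d v_g') those of B_(u,a,b).  The induced algebra maps are
   mutually inverse, and they respect the coactions because the coaction value
   1 (x) x + v_x (x) g depends additively on v_x. *)

Fixpoint qbin (S : pzRingType) (q : S) (n k : nat) : S :=
  match n with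
  | 0 => (k == 0)%:R
  | n'.+1 => (if k is k'.+1 then qbin q n' k' else 0) + q ^+ k * qbin q n' k
  end.

Arguments qbin : simpl never.

Definition qpoch (S : pzRingType) (q : S) (m : nat) : S :=
  \prod_(i < m) (1 - q ^+ i.+1).

Section QBinomial.
Variables (S : pzRingType) (q : S).

Lemma qbinS n k :
  qbin q n.+1 k = (if k is k'.+1 then qbin q n k' else 0) + q ^+ k * qbin q n k.
Proof. by []. Qed.

Lemma qbin_small n k : (n < k)%N -> qbin q n k = 0.
Proof.
elim: n k => [|n IHn] [|k] // ltnk.
by rewrite qbinS !IHn ?mulr0 ?addr0 // ltnW.
Qed.

Lemma qbin0 n : qbin q n 0 = 1.
Proof. by elim: n => // n IHn; rewrite qbinS IHn mulr1 add0r. Qed.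

Lemma qbinn n : qbin q n n = 1.
Proof. by elim: n => // n IHn; rewrite qbinS IHn qbin_small // mulr0 addr0. Qed.

Lemma qpochS m : qpoch q m.+1 = qpoch q m * (1 - q ^+ m.+1).
Proof. exact: big_ord_recr. Qed.

End QBinomial.

Lemma qbin_qpoch (S : comPzRingType) (q : S) n k : (k <= n)%N ->
  qbin q n k * qpoch q k * qpoch q (n - k) = qpoch q n.
Proof.
elim: n k => [|n IHn] [|k] // lekn.
- by rewrite qbin0 /qpoch big_ord0 !mul1r.
- by rewrite qbin0 subn0 /qpoch big_ord0 !mul1r.
rewrite qbinS subSS; have [ltkn | geqkn] := ltnP k n; last first.
  have -> : k = n by apply/eqP; rewrite eqn_leq geqkn andbT -ltnS.
  by rewrite qbinn qbin_small // mulr0 addr0 subnn /qpoch big_ord0 mulr1 mul1r.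
have [m Em] : exists m, (n - k = m.+1)%N by exists (n - k.+1)%N; rewrite subnSK.
have Ek : (n - k.+1 = m)%N by rewrite subnS Em.
have IHk := IHn k (ltnW ltkn); have IHk1 := IHn k.+1 ltkn.
rewrite Em qpochS in IHk; rewrite Ek qpochS in IHk1.
have qkm : q ^+ k.+1 * q ^+ m.+1 = q ^+ n.+1.
  by rewrite -exprD addSn -Em subnKC // ltnW.
rewrite Em !qpochS -qkm; transitivity
  ((1 - q ^+ k.+1) * (qbin q n k * qpoch q k * (qpoch q m * (1 - q ^+ m.+1)))
   + q ^+ k.+1 * (1 - q ^+ m.+1) * (qbin q n k.+1 * (qpoch q k * (1 - q ^+ k.+1)) * qpoch q m)).
  by ring.
by rewrite IHk IHk1; ring.
Qed.

Lemma qbin_prim_root (S : idomainType) (z : S) N k :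
  N.-primitive_root z -> (0 < k < N)%N -> qbin z N k = 0.
Proof.
move=> prim_z /andP[k_gt0 ltkN].
have qpoch_neq0 m : (m < N)%N -> qpoch z m != 0.
  move=> ltmN; apply/prodf_neq0 => i _; rewrite subr_eq0 eq_sym.
  rewrite -(prim_order_dvd prim_z); apply/negP => /dvdn_leq.
  by move/(_ isT); rewrite leqNgt (leq_ltn_trans (ltn_ord i) ltmN).
have qpochN0 : qpoch z N = 0.
  case: N {qpoch_neq0} prim_z ltkN => // N prim_z _.
  by rewrite qpochS prim_expr_order // subrr mulr0.
have ltNkN : (N - k < N)%N by rewrite ltn_subrL k_gt0 (leq_ltn_trans _ ltkN).
have /eqP := qbin_qpoch z (ltnW ltkN).
by rewrite qpochN0 !mulf_eq0 !(negPf (qpoch_neq0 _ _)) // !orbF => /eqP.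
Qed.

Lemma horner_qbin (S : comNzRingType) (q : S) n k :
  (map_poly intr (qbin 'X n k)).[q] = qbin q n k.
Proof.
elim: n k => [|n IHn] [|k]; rewrite ?qbin0 ?rmorph1 ?hornerE //.
  by rewrite !qbin_small // rmorph0 horner0.
by rewrite !qbinS rmorphD rmorphM rmorphXn /= map_polyX hornerD hornerM hornerXn !IHn.
Qed.

(* 'Phi_N is the minimal polynomial of z, so the remainder of p modulo 'Phi_N,
   which vanishes at z and is shorter than 'Phi_N, is zero. *)
Lemma Cyclotomic_dvd_prim_root (p : {poly int}) N (z : algC) :
  N.-primitive_root z -> root (map_poly intr p) z -> exists Q, p = Q * 'Phi_N.
Proof.
move=> prim_z pz0; have monPhi := Cyclotomic_monic N.
have [pf [Dpf _] dv_pf] := minCpolyP z.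
have ZtoC_QtoC (r : {poly int}) :
    map_poly intr r = map_poly ratr (map_poly intr r) :> {poly algC}.
  by rewrite -map_poly_comp; apply: eq_map_poly => c /=; rewrite rmorph_int.
have Epf : pf = map_poly intr 'Phi_N.
  apply: (@map_inj_poly _ _ (ratr : rat -> algC)); [exact: fmorph_inj | by rewrite rmorph0|].
  by rewrite -Dpf (minCpoly_cyclotomic prim_z) -(Cintr_Cyclotomic prim_z) ZtoC_QtoC.
exists (p %/ 'Phi_N); set r := p %% 'Phi_N.
have Er : p = p %/ 'Phi_N * 'Phi_N + r.
  by rewrite /r Pdiv.IdomainMonic.divpE // Pdiv.IdomainMonic.modpE // -Pdiv.RingMonic.rdivp_eq.
suff r0 : r = 0 by rewrite {1}Er r0 addr0.
have pf_dvd_r : pf %| map_poly intr r.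
  rewrite -dv_pf -ZtoC_QtoC /root.
  have -> : r = p - p %/ 'Phi_N * 'Phi_N by rewrite {1}Er addrC addKr.
  rewrite rmorphB rmorphM /= hornerD hornerN hornerM (eqP pz0).
  have /rootP Phi_z : root (cyclotomic z N) z by rewrite root_cyclotomic.
  by rewrite (Cintr_Cyclotomic prim_z) Phi_z mulr0 subrr.
have size_ZtoQ (s : {poly int}) : size (map_poly intr s : {poly rat}) = size s.
  by apply: size_map_inj_poly; [exact: intr_inj | rewrite rmorph0].
apply/eqP; apply/negP => /negP r_neq0.
have := dvdp_leq _ pf_dvd_r; rewrite -size_poly_eq0 size_ZtoQ size_poly_eq0.
by rewrite r_neq0 Epf !size_ZtoQ leqNgt ltn_modpN0 ?monic_neq0 // => /(_ isT).
Qed.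

Lemma qbin_cyclotomic_root (S : comNzRingType) (q : S) N k :
  root (map_poly intr 'Phi_N) q -> (0 < k < N)%N -> qbin q N k = 0.
Proof.
move=> Phi_q /andP[k_gt0 ltkN].
have [z prim_z] := C_prim_root_exists (leq_ltn_trans (leq0n k) ltkN).
have qbin_z : root (map_poly intr (qbin 'X N k)) z.
  by rewrite /root horner_qbin qbin_prim_root ?k_gt0.
have [Q EQ] := Cyclotomic_dvd_prim_root prim_z qbin_z.
by rewrite -horner_qbin EQ rmorphM /= hornerM (eqP Phi_q) mulr0.
Qed.

Section QCommuting.
Variables (R : comNzRingType) (C : algType R) (q : R) (X Y : C).
Hypothesis YX : Y * X = q *: (X * Y).

Lemma qcomm_exprX k : Y * X ^+ k = q ^+ k *: (X ^+ k * Y).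
Proof.
elim: k => [|k IHk]; first by rewrite !expr0 mul1r mulr1 scale1r.
rewrite exprSr mulrA IHk -scalerAl -(mulrA _ Y) YX -scalerAr scalerA mulrA.
by rewrite -!exprSr.
Qed.

Lemma exprD_qcomm n :
  (X + Y) ^+ n = \sum_(k < n.+1) qbin q n k *: (X ^+ k * Y ^+ (n - k)).
Proof.
elim: n => [|n IHn]; first by rewrite big_ord1 !expr0 mulr1 scale1r.
rewrite exprS IHn mulrDl !mulr_sumr.
under [RHS]eq_bigr do rewrite qbinS scalerDl.
rewrite big_split /= [X in _ = X + _]big_ord_recl scale0r add0r.
rewrite [X in _ = _ + X]big_ord_recr /= qbin_small // mulr0 scale0r addr0.
congr (_ + _); apply: eq_bigr => i _.
  by rewrite /bump /= add1n subSS -scalerAr mulrA -exprS.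
rewrite -scalerAr mulrA qcomm_exprX -scalerAl scalerA mulrC -mulrA -exprS subSn //.
by rewrite -ltnS.
Qed.

Lemma exprD_qcomm_cyclotomic N : (0 < N)%N -> root (map_poly intr 'Phi_N) q ->
  (X + Y) ^+ N = X ^+ N + Y ^+ N.
Proof.
case: N => // N _ Phi_q; rewrite exprD_qcomm big_ord_recl big_ord_recr.
rewrite big1 => [|i _]; last by rewrite qbin_cyclotomic_root ?scale0r //= ltnS.
by rewrite /= qbin0 qbinn subn0 subnn expr0 mul1r mulr1 !scale1r add0r addrC.
Qed.

End QCommuting.

Section AlgHom.
Variables (R : comUnitRingType) (A C D : algType R).

Lemma alg_hom0 (h : A -> C) : is_alg_hom h -> h 0 = 0.
Proof. by case=> hD _ _ _; apply: (addrI (h 0)); rewrite -hD !addr0. Qed.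

Lemma alg_hom_sum (h : A -> C) I (r : seq I) (P : pred I) (F : I -> A) :
  is_alg_hom h -> h (\sum_(i <- r | P i) F i) = \sum_(i <- r | P i) h (F i).
Proof. by move=> hh; case: (hh) => hD _ _ _; exact: (big_morph h hD (alg_hom0 hh)). Qed.

Lemma alg_hom_id : is_alg_hom (@id A).
Proof. by []. Qed.

Lemma alg_hom_comp (h : A -> C) (k : C -> D) :
  is_alg_hom h -> is_alg_hom k -> is_alg_hom (k \o h).
Proof.
case=> hD hZ hM h1 [kD kZ kM k1]; split=> /= [x y|r x|x y|].
- by rewrite hD kD.
- by rewrite hZ kZ.
- by rewrite hM kM.
- by rewrite h1 k1.
Qed.

End AlgHom.

Section SubalgebraInduction.
Variables (R : comUnitRingType) (A : algType R) (S : {pred A}).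
Hypothesis S1 : 1 \in S.
Hypothesis SD : forall x y, x \in S -> y \in S -> x + y \in S.
Hypothesis SZ : forall (r : R) x, x \in S -> r *: x \in S.
Hypothesis SM : forall x y, x \in S -> y \in S -> x * y \in S.

Let S_subalg_closed : subalg_closed S.
Proof. by split=> // r x y xS yS; apply: SD => //; apply: SZ. Qed.

HB.instance Definition _ := GRing.isSubalgClosed.Build R A S S_subalg_closed.

Record subalg := Subalg { subalg_val : A; _ : subalg_val \in S }.
HB.instance Definition _ := [isSub for subalg_val].
HB.instance Definition _ := [Choice of subalg by <:].
HB.instance Definition _ := [SubChoice_isSubAlgebra of subalg by <:].

Lemma subalg_val_alg_hom : is_alg_hom (val : subalg -> A).
Proof.
split=> [x y|r x|x y|]; [exact: rmorphD | exact: linearZ | exact: rmorphM | exact: rmorph1].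
Qed.

Lemma is_B_ind N q u a b (vg vx : A) : is_B N q u a b vg vx ->
  vg \in S -> vx \in S -> forall y, y \in S.
Proof.
case=> rel univ gS xS y.
have [vD vZ vM _] := subalg_val_alg_hom.
have rel_sub : B_rel N q u a b (Subalg gS) (Subalg xS).
  case: rel => g_N x_N xg; split; apply: val_inj.
  - by rewrite rmorphXn.
  - by rewrite rmorphXn.
  - by rewrite vM vD !vZ vM rmorphXn.
have [[h [h_hom hg hx]] _] := univ _ _ _ rel_sub.
have [_ uniq] := univ _ _ _ rel.
have val_h : val \o h =1 id.
  by apply: uniq; [exact: alg_hom_comp h_hom subalg_val_alg_hom | exact: alg_hom_id
    | rewrite /= hg | rewrite /= hx].
by rewrite -(val_h y) /=; apply: valP.
Qed.

End SubalgebraInduction.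

Section Shift.
Variables (R : comUnitRingType) (C : algType R) (N : nat) (q : R).
Hypotheses (N_gt0 : (0 < N)%N) (Phi_q : root (map_poly intr 'Phi_N) q).

Lemma qcomm_shift (g x : C) (b e : R) :
  x * g = q *: (g * x) + b *: g ^+ 2 ->
  (x + e *: g) * g = q *: (g * (x + e *: g)) + (b + e - q * e) *: g ^+ 2.
Proof.
move=> xg; rewrite mulrDl xg mulrDr -scalerAl -scalerAr expr2 scalerDr scalerA.
by rewrite -!addrA; congr (_ + _); rewrite -!scalerDl; congr (_ *: _); ring.
Qed.

Lemma exprD_shift_qcomm (g x : C) (e : R) : x * g = q *: (g * x) ->
  (x + e *: g) ^+ N = x ^+ N + e ^+ N *: g ^+ N.
Proof.
move=> xg; have xeg : x * (e *: g) = q *: ((e *: g) * x).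
  by rewrite -scalerAr xg scalerA mulrC -scalerA scalerAl.
by rewrite addrC (exprD_qcomm_cyclotomic xeg) // addrC exprZn.
Qed.

Lemma B_rel_shift (u a e : R) (g x : C) : B_rel N q u a 0 g x ->
  B_rel N q u (a + e ^+ N * u) (e - q * e) g (x + e *: g).
Proof.
case=> g_N x_N xg; split=> //.
- rewrite scale0r addr0 in xg.
  by rewrite exprD_shift_qcomm // x_N g_N scalerA scalerDl.
- by rewrite (qcomm_shift _ xg) add0r.
Qed.

Lemma B_rel_unshift (u a e : R) (g x : C) : B_rel N q u a (e - q * e) g x ->
  B_rel N q u (a - e ^+ N * u) 0 g (x - e *: g).
Proof.
case=> g_N x_N xg.
have xg' : (x - e *: g) * g = q *: (g * (x - e *: g)) + 0 *: g ^+ 2.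
  by rewrite -scaleNr (qcomm_shift _ xg); congr (_ + _ *: _); ring.
split=> //; apply: (addIr ((e ^+ N * u) *: 1)).
rewrite scale0r addr0 in xg'.
rewrite -scalerDl subrK -x_N -[in RHS](subrK (e *: g) x).
by rewrite exprD_shift_qcomm // g_N scalerA.
Qed.

End Shift.

Lemma is_B_endo_id (R : comUnitRingType) N (q u a b : R) (A : algType R) (vg vx : A)
    (h : A -> A) :
  is_B N q u a b vg vx -> is_alg_hom h -> h vg = vg -> h vx = vx -> h =1 id.
Proof.
by case=> rel univ h_hom hg hx; apply: (univ _ _ _ rel).2 => //; apply: alg_hom_id.
Qed.

Definition is_tens_alg_hom (R : comUnitRingType) N (q : R) (A : algType R)
    (rho : A -> tens N A) : Prop :=
  [/\ forall y z, rho (y + z) = tadd (rho y) (rho z),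
      forall (r : R) y, rho (r *: y) = (fun i j => r *: rho y i j),
      forall y z, rho (y * z) = tmul q (rho y) (rho z)
    & rho 1 = tbas 1 0 0].

Section TensorMaps.
Variables (R : comUnitRingType) (N : nat) (q : R) (A A' : algType R) (f : A -> A').
Hypothesis f_hom : is_alg_hom f.

Lemma alg_hom_tbas (y : A) m n i j : f (@tbas _ N _ y m n i j) = tbas (f y) m n i j.
Proof. by rewrite /tbas; case: ifP; rewrite ?alg_hom0. Qed.

Lemma alg_hom_tmul (s t : tens N A) k l :
  f (tmul q s t k l) = tmul q (fun i j => f (s i j)) (fun i j => f (t i j)) k l.
Proof.
have [_ fZ fM _] := f_hom.
rewrite /tmul alg_hom_sum //; apply: eq_bigr => i _.
rewrite alg_hom_sum //; apply: eq_bigr => j _.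
rewrite alg_hom_sum //; apply: eq_bigr => i' _.
rewrite alg_hom_sum //; apply: eq_bigr => j' _.
by case: ifP; rewrite ?alg_hom0 // fZ fM.
Qed.

Lemma eq_tmul (s s' t t' : tens N A') k l : (forall i j, s i j = s' i j) ->
  (forall i j, t i j = t' i j) -> tmul q s t k l = tmul q s' t' k l.
Proof.
move=> ss' tt'; apply: eq_bigr => i _; apply: eq_bigr => j _.
by apply: eq_bigr => i' _; apply: eq_bigr => j' _; rewrite ss' tt'.
Qed.

Lemma is_B_comod_hom u a b (vg vx : A) (rho : A -> tens N A) (rho' : A' -> tens N A') :
  is_B N q u a b vg vx -> is_tens_alg_hom q rho -> is_tens_alg_hom q rho' ->
  (forall i j, rho' (f vg) i j = f (rho vg i j)) ->
  (forall i j, rho' (f vx) i j = f (rho vx i j)) ->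
  forall y i j, rho' (f y) i j = f (rho y i j).
Proof.
move=> HB [rD rZ rM r1] [rD' rZ' rM' r1'] fg fx.
have [fD fZ fM f1] := f_hom.
pose P : {pred A} := [pred y | [forall i, forall j, rho' (f y) i j == f (rho y i j)]].
have PP y : reflect (forall i j, rho' (f y) i j = f (rho y i j)) (y \in P).
  apply: (iffP forallP) => [P_y i j | P_y i]; first exact/eqP/(forallP (P_y i)).
  by apply/forallP => j; apply/eqP.
have P1 : 1 \in P by apply/PP => i j; rewrite f1 r1 r1' alg_hom_tbas f1.
have PD x z : x \in P -> z \in P -> x + z \in P.
  by move=> /PP Px /PP Pz; apply/PP => i j; rewrite fD rD rD' /tadd Px Pz fD.
have PZ r x : x \in P -> r *: x \in P.
  by move=> /PP Px; apply/PP => i j; rewrite fZ rZ rZ' Px fZ.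
have PM x z : x \in P -> z \in P -> x * z \in P.
  by move=> /PP Px /PP Pz; apply/PP => i j; rewrite fM rM rM' alg_hom_tmul; apply: eq_tmul.
by move=> y; apply/PP; apply: (is_B_ind P1 PD PZ PM HB); apply/PP.
Qed.

End TensorMaps.

Theorem corollary1p6 (R : comUnitRingType) (N : nat) (q : R) :
  (2 <= N)%N -> cyclotomic_root N q ->
  forall (u a b : R), u \is a GRing.unit ->
  forall (A : algType R) (vg vx : A) (rho : A -> tens N A),
    is_B N q u a b vg vx -> is_B_coaction q vg vx rho ->
  (1 - q) \is a GRing.unit ->
  exists a' : R,
    forall (A' : algType R) (vg' vx' : A') (rho' : A' -> tens N A'),
      is_B N q u a' 0 vg' vx' -> is_B_coaction q vg' vx' rho' ->
      exists f : A -> A', comod_alg_iso rho rho' f.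
Proof.
move=> N_ge2 Phi_q u a b _ A vg vx rho HB [rho_hom [rho_g rho_x]] unit_1q.
have N_gt0 : (0 < N)%N by apply: ltnW.
set d := b / (1 - q).
have bE : b = d - q * d by rewrite -{1}(mul1r d) -mulrBl mulrC divrK.
exists (a - d ^+ N * u) => A' vg' vx' rho' HB' [rho'_hom [rho'_g rho'_x]].
have rel_f : B_rel N q u a b vg' (vx' + d *: vg').
  by rewrite bE -[a in B_rel _ _ _ a](subrK (d ^+ N * u)); exact: B_rel_shift HB'.1.
have rel_g : B_rel N q u (a - d ^+ N * u) 0 vg (vx - d *: vg).
  by apply: (B_rel_unshift N_gt0 Phi_q (e := d)); rewrite -bE; exact: HB.1.
have [[f [f_hom fg fx]] _] := HB.2 _ _ _ rel_f.
have [[g [g_hom gg gx]] _] := HB'.2 _ _ _ rel_g.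
have [[fD fZ _ f1] [gD gZ _ _]] := (f_hom, g_hom).
exists f; split=> //.
- exists g => y.
  + apply: (is_B_endo_id HB (alg_hom_comp f_hom g_hom)) => /=; first by rewrite fg gg.
    by rewrite fx gD gZ gg gx subrK.
  + apply: (is_B_endo_id HB' (alg_hom_comp g_hom f_hom)) => /=; first by rewrite gg fg.
    by rewrite gx -scaleNr fD fZ fx fg scaleNr addrK.
- apply: (is_B_comod_hom f_hom HB rho_hom rho'_hom) => i j.
    by rewrite rho_g (alg_hom_tbas f_hom) fg rho'_g.
  have [rD' rZ' _ _] := rho'_hom.
  rewrite rho_x /tadd fD !(alg_hom_tbas f_hom) f1 fx rD' rZ' rho'_x rho'_g.
  by rewrite /tadd /tbas; do 2!case: ifP => _; rewrite ?scaler0 ?addr0 ?addrA.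
Qed.
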